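(* Let $n\geq1$ and $p,q>1$ satisfy \[ \frac{p+1}{pq-1}>\frac{n-1}{2},\qquad \frac{n-1}{2}(q-1)<1 . \] Let $\varepsilon>0$ and $C>0$, and suppose $H\in C^1(\mathbb{R}_+)$ and $G\in C^2(\mathbb{R}_+)$ satisfy, for all $t\geq0$, \[ H'(t)\geq C\langle t\rangle^{-\frac{n-1}{2}(q-1)}G(t)^q,\quad H(t)\geq0,\quad H'(t)\geq0, \] \[ G''(t)+2G'(t)\geq C\langle t\rangle^{-\frac{n-1}{2}(p-1)}H(t)^p,\quad G(t)\geq C\varepsilon,\quad G'(t)\geq0 . \] Then for any $M>0$ there exist constants $A>0$ and $T>0$ (possibly depending on $\varepsilon$) such that $G(t)\geq A\langle t\rangle^M$ for all $t\geq T$.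
   Context: $\langle t\rangle:=\sqrt{1+t^2}$, $\mathbb{R}_+=[0,\infty)$. *)

From Stdlib Require Import Reals Lra.
From Coquelicot Require Import Coquelicot.
Open Scope R_scope.

Definition jb (t : R) : R := sqrt (1 + t ^ 2).

(* real power x^a for x >= 0 (with 0^a = 0, a > 0 in all uses) *)
Definition rpow (x a : R) : R := if Rlt_dec 0 x then Rpower x a else 0.

Definition cont_Rplus (f : R -> R) : Prop :=
  (forall t, 0 < t -> continuous f t) /\
  filterlim f (at_right 0) (locally (f 0)).

From Stdlib Require Import Reals Lra.
From Coquelicot Require Import Coquelicot.
Open Scope R_scope.

(* Bootstrap on polynomial lower bounds, with a = (n - 1) / 2.  If G >= B t^k
   for large t, integrating H' >= C <t>^(-a(q-1)) G^q gives H >~ t^(kq - a(q-1) + 1)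
   (the exponent stays above -1 because a(q-1) < 1), and integrating
   (G' + 2G)' >= C <t>^(-a(p-1)) H^p gives G' + 2G >~ t^(pqk + k1) with
   k1 = p + 1 - a(pq - 1) > 0.  As G is nondecreasing, comparing G on [t-1, t]
   absorbs the term 2G, so G >~ t^(pqk + k1).  Starting from G >= C eps, i.e.
   k = 0, the exponent grows at least by k1 per round and passes any M; finally
   <t> <= 2t for t >= 1. *)

Lemma Rpower_gt_0 x y : 0 < Rpower x y.
Proof. unfold Rpower; apply exp_pos. Qed.

Lemma rpow_Rpower x a : 0 < x -> rpow x a = Rpower x a.
Proof. intros hx; unfold rpow; destruct (Rlt_dec 0 x); [reflexivity | lra]. Qed.

Lemma jb_bounds t : 1 <= t -> t <= jb t <= 2 * t.
Proof.
intros ht; unfold jb; split.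
- rewrite <- (sqrt_square t) at 1 by lra; apply sqrt_le_1; nra.
- rewrite <- (sqrt_square (2 * t)) by lra; apply sqrt_le_1; nra.
Qed.

Lemma nondecreasing_of_derive_nonneg (f df : R -> R) (a b : R) : a <= b ->
  (forall s, a <= s <= b -> is_derive f s (df s)) ->
  (forall s, a <= s <= b -> 0 <= df s) -> f a <= f b.
Proof.
intros hab hd hpos.
destruct (MVT_gen f a b df) as [c [hc hfc]]; rewrite ?Rmin_left, ?Rmax_right in * by lra.
- intros x hx; apply hd; lra.
- intros x hx; apply derivable_continuous_pt; exists (df x); apply is_derive_Reals, hd; lra.
- assert (0 <= df c) by (apply hpos; lra); nra.
Qed.

Lemma eventually_ge (a : R) : Rbar_locally p_infty (fun t => a <= t).
Proof. exists a; intros; lra. Qed.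

Lemma Rpower_eventually_ge (e K : R) : 0 < e ->
  Rbar_locally p_infty (fun t => K <= Rpower t e).
Proof.
intros he; exists (Rpower (Rmax 1 K) (/ e)); intros t ht.
assert (hK : Rpower (Rpower (Rmax 1 K) (/ e)) e <= Rpower t e)
  by (apply Rle_Rpower_l; [lra | split; [apply Rpower_gt_0 | lra]]).
pose proof (Rmax_l 1 K); pose proof (Rmax_r 1 K).
rewrite Rpower_mult, Rinv_l, Rpower_1 in hK by lra; lra.
Qed.

Definition dominates_pow (f : R -> R) (k : R) : Prop :=
  exists B, 0 < B /\ Rbar_locally p_infty (fun t => B * Rpower t k <= f t).

Lemma dominates_pow_le (f g : R -> R) k : dominates_pow f k ->
  Rbar_locally p_infty (fun t => f t <= g t) -> dominates_pow g k.
Proof.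
intros [B [hB hf]] hfg; exists B; split; [exact hB |].
generalize (filter_and _ _ hf hfg); apply filter_imp; intros t [hft hfgt]; lra.
Qed.

Lemma dominates_pow_weaken (f : R -> R) k k' : k' <= k ->
  dominates_pow f k -> dominates_pow f k'.
Proof.
intros hk [B [hB hf]]; exists B; split; [exact hB |].
generalize (filter_and _ _ hf (eventually_ge 1)); apply filter_imp; intros t [hft ht].
assert (Rpower t k' <= Rpower t k) by (apply Rle_Rpower; lra).
apply (Rle_trans _ (B * Rpower t k)); [apply Rmult_le_compat_l |]; lra.
Qed.

Lemma dominates_pow_mul (f g : R -> R) k l : dominates_pow f k -> dominates_pow g l ->
  dominates_pow (fun t => f t * g t) (k + l).
Proof.
intros [B [hB hf]] [D [hD hg]]; exists (B * D); split; [nra |].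
generalize (filter_and _ _ hf hg); apply filter_imp; intros t [hft hgt].
pose proof (Rpower_gt_0 t k); pose proof (Rpower_gt_0 t l).
rewrite Rpower_plus.
replace (B * D * (Rpower t k * Rpower t l)) with ((B * Rpower t k) * (D * Rpower t l)) by ring.
apply Rmult_le_compat; nra.
Qed.

Lemma dominates_pow_const C : 0 < C -> dominates_pow (fun _ => C) 0.
Proof.
intros hC; exists C; split; [exact hC |].
generalize (eventually_ge 1); apply filter_imp; intros t ht.
rewrite Rpower_O by lra; lra.
Qed.

Lemma dominates_pow_rpow (f : R -> R) k p : 0 < p ->
  dominates_pow f k -> dominates_pow (fun t => rpow (f t) p) (k * p).
Proof.
intros hp [B [hB hf]]; exists (Rpower B p); split; [apply Rpower_gt_0 |].
generalize hf; apply filter_imp; intros t hft.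
assert (hBt : 0 < B * Rpower t k) by (pose proof (Rpower_gt_0 t k); nra).
rewrite rpow_Rpower by lra.
rewrite <- Rpower_mult, Rpower_mult_distr by (try exact hB; apply Rpower_gt_0).
apply Rle_Rpower_l; lra.
Qed.

Lemma dominates_pow_jb a : a <= 0 -> dominates_pow (fun t => rpow (jb t) a) a.
Proof.
intros ha; exists (Rpower 2 a); split; [apply Rpower_gt_0 |].
generalize (eventually_ge 1); apply filter_imp; intros t ht.
destruct (jb_bounds t ht) as [hlo hhi].
rewrite rpow_Rpower, Rpower_mult_distr by lra.
replace a with (- (- a)) by ring; rewrite !(Rpower_Ropp _ (- a)).
apply Rinv_le_contravar; [apply Rpower_gt_0 |].
apply Rle_Rpower_l; lra.
Qed.

Lemma dominates_pow_forcing (f : R -> R) C a p k : 0 < C -> 0 <= a -> 0 < p ->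
  dominates_pow f k ->
  dominates_pow (fun t => C * rpow (jb t) (- a) * rpow (f t) p) (k * p - a).
Proof.
intros hC ha hp hf.
replace (k * p - a) with (0 + - a + k * p) by ring.
apply dominates_pow_mul; [apply dominates_pow_mul |].
- now apply dominates_pow_const.
- apply dominates_pow_jb; lra.
- now apply dominates_pow_rpow.
Qed.

Lemma dominates_pow_antiderivative (f df : R -> R) m : -1 < m ->
  Rbar_locally p_infty (fun t => is_derive f t (df t)) ->
  Rbar_locally p_infty (fun t => 0 <= f t) ->
  dominates_pow df m -> dominates_pow f (m + 1).
Proof.
intros hm hd hf [c [hc hdf]].
set (e := m + 1); assert (he : 0 < e) by (unfold e; lra).
destruct (filter_and _ _ (filter_and _ _ hd hf) (filter_and _ _ hdf (eventually_ge 1)))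
  as [T0 hT0].
set (T := T0 + 1).
assert (hT : T0 < T) by (unfold T; lra).
exists (c / (2 * e)); split; [apply Rdiv_lt_0_compat; lra |].
generalize (filter_and _ _ (eventually_ge T) (Rpower_eventually_ge e (2 * Rpower T e) he)).
apply filter_imp; intros t [hTt hte].
assert (hgap : f T - c / e * Rpower T e <= f t - c / e * Rpower t e).
{ apply (nondecreasing_of_derive_nonneg (fun s => f s - c / e * Rpower s e)
    (fun s => df s - c / e * (e * Rpower s (e - 1)))); [exact hTt | |];
    intros s hs; destruct (hT0 s ltac:(lra)) as [[hds _] [hdfs hs1]].
  - apply is_derive_Reals, (derivable_pt_lim_minus f (fun s => c / e * Rpower s e)).
    + now apply is_derive_Reals.
    + apply (derivable_pt_lim_scal (fun s => Rpower s e)), derivable_pt_lim_power; lra.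
  - replace (e - 1) with m by (unfold e; ring).
    replace (c / e * (e * Rpower s m)) with (c * Rpower s m) by (field; lra); lra. }
destruct (hT0 T hT) as [[_ hfT] _].
assert (c / e * Rpower t e <= 2 * (c / e * Rpower t e - c / e * Rpower T e)).
{ assert (0 < c / e) by (apply Rdiv_lt_0_compat; lra); nra. }
replace (c / (2 * e) * Rpower t e) with (/ 2 * (c / e * Rpower t e)) by (field; lra); lra.
Qed.

Lemma dominates_pow_damped (G G1 : R -> R) r : 0 <= r ->
  Rbar_locally p_infty (fun t => is_derive G t (G1 t)) ->
  Rbar_locally p_infty (fun t => 0 <= G1 t) ->
  Rbar_locally p_infty (fun t => 0 <= G t) ->
  dominates_pow (fun t => G1 t + 2 * G t) r -> dominates_pow G r.
Proof.
intros hr hd hG1 hG [c [hc hsum]].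
destruct (filter_and _ _ (filter_and _ _ hd hG1)
  (filter_and _ _ hG (filter_and _ _ hsum (eventually_ge 1)))) as [T0 hT0].
exists (c * Rpower (/ 2) r / 3); split; [pose proof (Rpower_gt_0 (/ 2) r); nra |].
generalize (eventually_ge (T0 + 2)); apply filter_imp; intros t ht.
destruct (hT0 (t - 1) ltac:(lra)) as [_ [hGt1 [_ ht1]]].
set (L := c * Rpower (t - 1) r - 2 * G t).
(* on [t - 1, t] the monotone G stays below G t, so G' >= L there *)
assert (hslope : G (t - 1) - L * (t - 1) <= G t - L * t).
{ apply (nondecreasing_of_derive_nonneg (fun s => G s - L * s) (fun s => G1 s - L * 1));
    [lra | |];
    intros s hs; destruct (hT0 s ltac:(lra)) as [[hds hG1s] [_ [hsums _]]].
  - apply is_derive_Reals, (derivable_pt_lim_minus G (fun s => L * s)).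
    + now apply is_derive_Reals.
    + apply (derivable_pt_lim_scal id), derivable_pt_lim_id.
  - assert (G s <= G t).
    { apply (nondecreasing_of_derive_nonneg G G1); [lra | |]; intros x hx;
        destruct (hT0 x ltac:(lra)) as [[hdx hG1x] _]; assumption. }
    assert (Rpower (t - 1) r <= Rpower s r) by (apply Rle_Rpower_l; lra).
    unfold L; nra. }
assert (Rpower (/ 2) r * Rpower t r <= Rpower (t - 1) r)
  by (rewrite Rpower_mult_distr by lra; apply Rle_Rpower_l; lra).
unfold L in hslope; nra.
Qed.

Lemma jb_rpow_bound_of_dominates_pow (f : R -> R) M : 0 <= M -> dominates_pow f M ->
  exists A T, 0 < A /\ 0 < T /\ forall t, T <= t -> f t >= A * rpow (jb t) M.
Proof.
intros hM [B [hB hf]].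
destruct (filter_and _ _ hf (eventually_ge 1)) as [T0 hT0].
pose proof (Rpower_gt_0 2 M).
exists (B / Rpower 2 M), (Rmax 1 (T0 + 1)).
split; [apply Rdiv_lt_0_compat; lra | split; [pose proof (Rmax_l 1 (T0 + 1)); lra |]].
intros t ht; pose proof (Rmax_r 1 (T0 + 1)).
destruct (hT0 t ltac:(lra)) as [hft ht1]; destruct (jb_bounds t ht1) as [hlo hhi].
assert (hjb : rpow (jb t) M <= Rpower 2 M * Rpower t M).
{ rewrite rpow_Rpower, Rpower_mult_distr by lra; apply Rle_Rpower_l; lra. }
apply Rle_ge, (Rle_trans _ (B / Rpower 2 M * (Rpower 2 M * Rpower t M))).
- apply Rmult_le_compat_l; [apply Rlt_le, Rdiv_lt_0_compat |]; lra.
- replace (B / Rpower 2 M * (Rpower 2 M * Rpower t M)) with (B * Rpower t M) by (field; lra); lra.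
Qed.

Section DampedSystem.

Variables (a p q C : R) (H H1 G G1 G2 : R -> R).
Hypothesis ha : 0 <= a.
Hypothesis hp : 1 < p.
Hypothesis hq : 1 < q.
Hypothesis haq : a * (q - 1) < 1.
Hypothesis hgain : 0 < p + 1 - a * (p * q - 1).
Hypothesis hC : 0 < C.
Hypothesis dH : Rbar_locally p_infty (fun t => is_derive H t (H1 t)).
Hypothesis dG : Rbar_locally p_infty (fun t => is_derive G t (G1 t)).
Hypothesis dG1 : Rbar_locally p_infty (fun t => is_derive G1 t (G2 t)).
Hypothesis hH1 : Rbar_locally p_infty
  (fun t => C * rpow (jb t) (- (a * (q - 1))) * rpow (G t) q <= H1 t).
Hypothesis hH : Rbar_locally p_infty (fun t => 0 <= H t).
Hypothesis hG2 : Rbar_locally p_infty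
  (fun t => C * rpow (jb t) (- (a * (p - 1))) * rpow (H t) p <= G2 t + 2 * G1 t).
Hypothesis hG : Rbar_locally p_infty (fun t => 0 <= G t).
Hypothesis hG1 : Rbar_locally p_infty (fun t => 0 <= G1 t).

Lemma dominates_pow_bootstrap k : 0 <= k -> dominates_pow G k ->
  dominates_pow G (p * q * k + (p + 1 - a * (p * q - 1))).
Proof.
intros hk hGk.
assert (hpqk : 0 <= p * q * k) by (apply Rmult_le_pos; nra).
assert (hHk : dominates_pow H (k * q - a * (q - 1) + 1)).
{ apply (dominates_pow_antiderivative H H1); [nra | exact dH | exact hH |].
  apply (dominates_pow_le _ _ _ (dominates_pow_forcing G C (a * (q - 1)) q k hC
    ltac:(nra) ltac:(lra) hGk) hH1). }
replace (p * q * k + (p + 1 - a * (p * q - 1)))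
  with ((k * q - a * (q - 1) + 1) * p - a * (p - 1) + 1) by ring.
apply (dominates_pow_damped G G1); [nra | exact dG | exact hG1 | exact hG |].
apply (dominates_pow_antiderivative _ (fun t => G2 t + 2 * G1 t)).
- nra.
- generalize (filter_and _ _ dG dG1); apply filter_imp; intros t [hdG hdG1].
  apply is_derive_Reals, (derivable_pt_lim_plus G1 (fun s => 2 * G s)).
  + now apply is_derive_Reals.
  + now apply (derivable_pt_lim_scal G), is_derive_Reals.
- generalize (filter_and _ _ hG hG1); apply filter_imp; intros t [hGt hG1t]; lra.
- apply (dominates_pow_le _ _ _ (dominates_pow_forcing H C (a * (p - 1)) p _ hC
    ltac:(nra) ltac:(lra) hHk) hG2).
Qed.

Lemma dominates_pow_iterate : dominates_pow G 0 ->
  forall N : nat, dominates_pow G (INR N * (p + 1 - a * (p * q - 1))).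
Proof.
intros hG0; induction N as [| N IH].
- now rewrite Rmult_0_l.
- assert (hk : 0 <= INR N * (p + 1 - a * (p * q - 1)))
    by (apply Rmult_le_pos; [apply pos_INR | lra]).
  eapply dominates_pow_weaken; [| exact (dominates_pow_bootstrap _ hk IH)].
  assert (1 <= p * q) by nra.
  rewrite S_INR; nra.
Qed.

Lemma dominates_pow_every_exponent M : dominates_pow G 0 -> dominates_pow G M.
Proof.
intros hG0.
destruct (INR_archimed _ M hgain) as [N hN].
eapply dominates_pow_weaken; [| exact (dominates_pow_iterate hG0 N)]; lra.
Qed.

End DampedSystem.

Theorem lemma5p2 (n : nat) (p q eps C : R)
  (H H1 G G1 G2 : R -> R) :
  (1 <= n)%nat -> 1 < p -> 1 < q ->
  (p + 1) / (p * q - 1) > (INR n - 1) / 2 ->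
  (INR n - 1) / 2 * (q - 1) < 1 ->
  0 < eps -> 0 < C ->
  (forall t, 0 < t -> is_derive H t (H1 t)) ->
  (forall t, 0 < t -> is_derive G t (G1 t)) ->
  (forall t, 0 < t -> is_derive G1 t (G2 t)) ->
  cont_Rplus H -> cont_Rplus H1 ->
  cont_Rplus G -> cont_Rplus G1 -> cont_Rplus G2 ->
  (forall t, 0 <= t ->
     H1 t >= C * rpow (jb t) (- ((INR n - 1) / 2 * (q - 1))) * rpow (G t) q
     /\ H t >= 0 /\ H1 t >= 0
     /\ G2 t + 2 * G1 t >= C * rpow (jb t) (- ((INR n - 1) / 2 * (p - 1))) * rpow (H t) p
     /\ G t >= C * eps /\ G1 t >= 0) ->
  forall M, 0 < M -> exists A T, 0 < A /\ 0 < T /\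
    forall t, T <= t -> G t >= A * rpow (jb t) M.
Proof.
(* only large t matters *)
intros hn hp hq hpq haq heps hC dH dG dG1 _ _ _ _ _ hyp M hM.
set (a := (INR n - 1) / 2) in *.
assert (ha : 0 <= a) by (apply le_INR in hn; unfold a; simpl in hn; lra).
assert (hgain : 0 < p + 1 - a * (p * q - 1)).
{ assert (hpq1 : 0 < p * q - 1) by nra.
  apply (Rmult_lt_compat_r (p * q - 1)) in hpq; [| exact hpq1].
  unfold Rdiv in hpq; rewrite Rmult_assoc, Rinv_l in hpq by lra; lra. }
assert (ev : forall P : R -> Prop, (forall t, 0 < t -> P t) -> Rbar_locally p_infty P)
  by (intros P hP; exists 0; exact hP).
assert (hCeps : 0 < C * eps) by nra.
apply jb_rpow_bound_of_dominates_pow; [lra |].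
apply (dominates_pow_every_exponent a p q C H H1 G G1 G2); try assumption;
  try (now apply ev); try (apply ev; intros t ht; destruct (hyp t ltac:(lra)); intuition lra).
apply (dominates_pow_le (fun _ => C * eps)); [now apply dominates_pow_const |].
apply ev; intros t ht; destruct (hyp t ltac:(lra)); intuition lra.
Qed.
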